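(* Consider a slender, possibly compressible/extensible filament moving in the plane (the $x$–$y$ plane) in an inertialess medium described by resistive force theory, with isotropic drag, i.e. $\gamma := C_\perp / C_\parallel = 1$. Let the filament be parametrised by a Lagrangian label $s_0 \in [0, L_0]$ (arc length in a reference configuration of length $L_0$), with current arc length $s = s(s_0,t)$ satisfying $\partial s/\partial s_0 = 1 + \eta\, p(s_0,t)$ for a constant $\eta$ and a prescribed function $p$, so that the current length is $L(t) = \int_0^{L_0}(1+\eta p(s_0,t))\,\mathrm{d}s_0$. Let $\bm{x}(s,t)$ denote the position in the laboratory frame of the material point with current arc length $s$, and define the centre of geometry $$\overline{\bm{X}}(t) = \frac{1}{L(t)} \int_0^{L(t)} \bm{x}(s,t)\,\mathrm{d}s .$$ Then: (i) if the compression is spatially uniform, i.e. $\partial p/\partial s_0 = 0$ for all times, then $\mathrm{d}\overline{\bm{X}}/\mathrm{d}t = \bm{0}$ for all times, so no net motion is possible; (ii) otherwise (if $\partial p/\partial s_0 \neq 0$), net motion is possible, i.e. $\mathrm{d}\overline{\bm{X}}/\mathrm{d}t$ need not vanish.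
   Context: Kinematics: the shape of the filament in a body-fixed frame is prescribed (through the compression function $p(s_0,t)$ above and a prescribed tangent-angle function $\tilde\theta(s_0,t)$ giving the body-frame position $\tilde{\bm{x}}(s_0,t)$); the laboratory position is $\bm{x} = \bm{X}(t) + \mathbf{R}_{\Theta(t)}\tilde{\bm{x}}(s_0,t)$, where $\bm{X}(t)$ and the rotation angle $\Theta(t)$ (with $\mathbf{R}_\Theta$ the planar rotation matrix) are unknowns of the rigid-body motion. The local velocity of a material point is the Lagrangian derivative $D\bm{x}/Dt = \partial \bm{x}(s_0,t)/\partial t$ at fixed $s_0$. Resistive force theory: the force per unit (current) length exerted by the medium on the filament is $\bm{f} = -C_\parallel\,(\tfrac{D\bm{x}}{Dt}\cdot \bm{e}_\parallel)\,\bm{e}_\parallel - C_\perp\,(\tfrac{D\bm{x}}{Dt}\cdot \bm{e}_\perp)\,\bm{e}_\perp$, where $\bm{e}_\parallel, \bm{e}_\perp$ are the local unit tangent and normal vectors and $C_\parallel, C_\perp > 0$ are the tangential and normal drag coefficients; isotropic drag $\gamma = 1$ means $C_\parallel = C_\perp = C$, so $\bm{f} = -C\, D\bm{x}/Dt$. Dynamics: the rigid motion $(\bm{X}(t),\Theta(t))$ is determined by the force-free and torque-free conditions $\int_0^{L(t)} \bm{f}\,\mathrm{d}s = \bm{0}$ and $\int_0^{L(t)} \tilde{\bm{x}} \times \tilde{\bm{f}}\,\mathrm{d}s = \bm{0}$ at every time (no external forces or torques). *)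

From Stdlib Require Import Reals.
From Coquelicot Require Import Coquelicot.
Open Scope R_scope.

Definition C1_2 (f : R -> R -> R) : Prop :=
  forall x y,
    ex_derive (fun u => f u y) x /\ ex_derive (fun v => f x v) y /\
    continuity_2d_pt f x y /\
    continuity_2d_pt (fun u v => Derive (fun w => f w v) u) x y /\
    continuity_2d_pt (fun u v => Derive (fun w => f u w) v) x y.

Definition differentiable (g : R -> R) : Prop := forall t, ex_derive g t.

(* ds/ds0 = 1 + eta p(s0,t) *)
Definition stretch (eta : R) (p : R -> R -> R) (s0 t : R) : R := 1 + eta * p s0 t.

Definition curlen (L0 eta : R) (p : R -> R -> R) (t : R) : R :=
  RInt (fun s0 => stretch eta p s0 t) 0 L0.

(* body-frame position obtained from the tangent angle th(s0,t):
   x~(s0,t) = int_0^s0 (1 + eta p(sg,t)) (cos th(sg,t), sin th(sg,t)) dsg *)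
Definition xbody1 eta p (th : R -> R -> R) s0 t : R :=
  RInt (fun sg => stretch eta p sg t * cos (th sg t)) 0 s0.
Definition xbody2 eta p (th : R -> R -> R) s0 t : R :=
  RInt (fun sg => stretch eta p sg t * sin (th sg t)) 0 s0.

(* laboratory position x = X(t) + R_{Theta(t)} x~(s0,t) *)
Definition xlab1 (X1 Th : R -> R) eta p th s0 t : R :=
  X1 t + cos (Th t) * xbody1 eta p th s0 t - sin (Th t) * xbody2 eta p th s0 t.
Definition xlab2 (X2 Th : R -> R) eta p th s0 t : R :=
  X2 t + sin (Th t) * xbody1 eta p th s0 t + cos (Th t) * xbody2 eta p th s0 t.

Definition vel1 X1 Th eta p th s0 t : R :=
  Derive (fun tau => xlab1 X1 Th eta p th s0 tau) t.
Definition vel2 X2 Th eta p th s0 t : R :=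
  Derive (fun tau => xlab2 X2 Th eta p th s0 tau) t.

Definition epar1 (Th : R -> R) (th : R -> R -> R) s0 t := cos (Th t + th s0 t).
Definition epar2 (Th : R -> R) (th : R -> R -> R) s0 t := sin (Th t + th s0 t).
Definition eperp1 (Th : R -> R) (th : R -> R -> R) s0 t := - sin (Th t + th s0 t).
Definition eperp2 (Th : R -> R) (th : R -> R -> R) s0 t := cos (Th t + th s0 t).

Definition rft1 Cpar Cperp X1 X2 Th eta p th s0 t : R :=
  let v1 := vel1 X1 Th eta p th s0 t in
  let v2 := vel2 X2 Th eta p th s0 t in
  let vpar := v1 * epar1 Th th s0 t + v2 * epar2 Th th s0 t in
  let vperp := v1 * eperp1 Th th s0 t + v2 * eperp2 Th th s0 t in
  - Cpar * vpar * epar1 Th th s0 t - Cperp * vperp * eperp1 Th th s0 t.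
Definition rft2 Cpar Cperp X1 X2 Th eta p th s0 t : R :=
  let v1 := vel1 X1 Th eta p th s0 t in
  let v2 := vel2 X2 Th eta p th s0 t in
  let vpar := v1 * epar1 Th th s0 t + v2 * epar2 Th th s0 t in
  let vperp := v1 * eperp1 Th th s0 t + v2 * eperp2 Th th s0 t in
  - Cpar * vpar * epar2 Th th s0 t - Cperp * vperp * eperp2 Th th s0 t.

Definition rftb1 Cpar Cperp X1 X2 Th eta p th s0 t : R :=
  cos (Th t) * rft1 Cpar Cperp X1 X2 Th eta p th s0 t
  + sin (Th t) * rft2 Cpar Cperp X1 X2 Th eta p th s0 t.
Definition rftb2 Cpar Cperp X1 X2 Th eta p th s0 t : R :=
  - sin (Th t) * rft1 Cpar Cperp X1 X2 Th eta p th s0 t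
  + cos (Th t) * rft2 Cpar Cperp X1 X2 Th eta p th s0 t.

(* ---------- dynamics: force-free and torque-free at every time ----------
   integrals over current arclength s in [0,L(t)] are written in the
   Lagrangian variable via ds = (1 + eta p) ds0. *)
Definition force_torque_free L0 eta p th Cpar Cperp X1 X2 Th : Prop :=
  forall t,
    RInt (fun s0 => rft1 Cpar Cperp X1 X2 Th eta p th s0 t * stretch eta p s0 t) 0 L0 = 0 /\
    RInt (fun s0 => rft2 Cpar Cperp X1 X2 Th eta p th s0 t * stretch eta p s0 t) 0 L0 = 0 /\
    RInt (fun s0 =>
            (xbody1 eta p th s0 t * rftb2 Cpar Cperp X1 X2 Th eta p th s0 t
             - xbody2 eta p th s0 t * rftb1 Cpar Cperp X1 X2 Th eta p th s0 t)
            * stretch eta p s0 t) 0 L0 = 0.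

Definition Xbar1 L0 eta p th X1 Th (t : R) : R :=
  / curlen L0 eta p t *
  RInt (fun s0 => xlab1 X1 Th eta p th s0 t * stretch eta p s0 t) 0 L0.
Definition Xbar2 L0 eta p th X2 Th (t : R) : R :=
  / curlen L0 eta p t *
  RInt (fun s0 => xlab2 X2 Th eta p th s0 t * stretch eta p s0 t) 0 L0.

Definition admissible L0 eta (p th : R -> R -> R) Cpar Cperp (X1 X2 Th : R -> R) : Prop :=
  0 < L0 /\ 0 < Cpar /\ 0 < Cperp /\
  C1_2 p /\ C1_2 th /\
  differentiable X1 /\ differentiable X2 /\ differentiable Th /\
  (forall s0 t, 0 <= s0 <= L0 -> 0 < stretch eta p s0 t).

From Stdlib Require Import Reals Lra.
From Coquelicot Require Import Coquelicot.
Open Scope R_scope.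

(* With isotropic drag the force density is -C times the Lagrangian velocity, since
   (e_par, e_perp) is an orthonormal frame. Under uniform stretching ds = lam(t) ds0 with lam
   independent of s0, so force balance reads int_0^L0 v ds0 = 0, while the centre of geometry
   is the plain Lagrangian mean (1/L0) int_0^L0 x ds0, whose time derivative is
   (1/L0) int_0^L0 v ds0 = 0. Differentiation under the integral sign is justified term by
   term: the rigid motion (X, Theta) is only differentiable, but the body-frame position is a
   primitive in s0 of a kernel that is C^1 in time, and its integral over [0, L0] is a single
   weighted integral by Cauchy's formula for repeated integration.
   With non-uniform stretching the arc-length weights no longer match the Lagrangian ones:
   a straight rod with p = (s0 - 1/2) sin t, whose body frame translates so as to balance
   the drag, has a centre of geometry moving with velocity cos t / 12. *)

Lemma continuity_2d_pt_swap (f : R -> R -> R) x y :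
  continuity_2d_pt f x y -> continuity_2d_pt (fun u v => f v u) y x.
Proof.
  intros H eps. destruct (H eps) as [d Hd].
  exists d. intros u v Hu Hv. apply Hd; assumption.
Qed.

Lemma continuity_2d_pt_continuous_l (f : R -> R -> R) x y :
  continuity_2d_pt f x y -> continuous (fun u => f u y) x.
Proof.
  intros H. apply continuity_pt_filterlim, continuity_pt_locally. intros eps.
  destruct (H eps) as [d Hd]. exists d. intros u Hu. apply Hd; [exact Hu|].
  rewrite Rminus_eq_0, Rabs_R0. apply cond_pos.
Qed.

Definition time_C1 (g : R -> R -> R) : Prop :=
  forall s t,
    continuity_2d_pt g s t /\ ex_derive (fun w => g s w) t /\
    continuity_2d_pt (fun u v => Derive (fun w => g u w) v) s t.

Lemma C1_2_time_C1 (g : R -> R -> R) : C1_2 g -> time_C1 g.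
Proof. intros H s t. destruct (H s t) as (_ & ? & ? & _ & ?). auto. Qed.

Lemma time_C1_static (w : R -> R) :
  (forall s, continuous w s) -> time_C1 (fun s _ => w s).
Proof.
  intros Hw s t. split; [|split].
  - apply (continuity_1d_2d_pt_comp w (fun u _ => u)).
    + apply continuity_pt_filterlim, Hw.
    + apply continuity_2d_pt_id1.
  - apply ex_derive_const.
  - eapply continuity_2d_pt_ext; [|apply continuity_2d_pt_const].
    intros u v. symmetry. apply Derive_const.
Qed.

Lemma time_C1_plus (f g : R -> R -> R) :
  time_C1 f -> time_C1 g -> time_C1 (fun s t => f s t + g s t).
Proof.
  intros Hf Hg s t.
  destruct (Hf s t) as (Cf & _ & _). destruct (Hg s t) as (Cg & _ & _).
  split; [|split].
  - now apply continuity_2d_pt_plus.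
  - apply (ex_derive_plus (fun w => f s w) (fun w => g s w)); [apply (Hf s t) | apply (Hg s t)].
  - eapply continuity_2d_pt_ext.
    + intros u v. symmetry. apply Derive_plus; [apply (Hf u v) | apply (Hg u v)].
    + apply continuity_2d_pt_plus; [apply (Hf s t) | apply (Hg s t)].
Qed.

Lemma time_C1_mult (f g : R -> R -> R) :
  time_C1 f -> time_C1 g -> time_C1 (fun s t => f s t * g s t).
Proof.
  intros Hf Hg s t.
  destruct (Hf s t) as (Cf & _ & CDf). destruct (Hg s t) as (Cg & _ & CDg).
  split; [|split].
  - now apply continuity_2d_pt_mult.
  - apply (ex_derive_mult (fun w => f s w) (fun w => g s w)); [apply (Hf s t) | apply (Hg s t)].
  - eapply continuity_2d_pt_ext.
    + intros u v. symmetry. apply Derive_mult; [apply (Hf u v) | apply (Hg u v)].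
    + apply continuity_2d_pt_plus; now apply continuity_2d_pt_mult.
Qed.

Lemma time_C1_comp (q dq : R -> R) (f : R -> R -> R) :
  (forall x, is_derive q x (dq x)) -> (forall x, continuity_pt dq x) ->
  time_C1 f -> time_C1 (fun s t => q (f s t)).
Proof.
  intros Hq Hdq Hf s t.
  assert (Cq : forall x, continuity_pt q x).
  { intros x. apply continuity_pt_filterlim, (ex_derive_continuous (V := R_NormedModule)).
    eexists. apply Hq. }
  assert (Dqf : forall u v, is_derive (fun w => q (f u w)) v
                              (Derive (fun w => f u w) v * dq (f u v))).
  { intros u v. apply (is_derive_comp q (fun w => f u w)); [apply Hq|].
    apply Derive_correct, (Hf u v). }
  destruct (Hf s t) as (Cf & _ & CDf).
  split; [|split].
  - now apply continuity_1d_2d_pt_comp.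
  - eexists. apply Dqf.
  - eapply continuity_2d_pt_ext.
    + intros u v. symmetry. apply is_derive_unique, Dqf.
    + apply continuity_2d_pt_mult; [exact CDf|].
      now apply continuity_1d_2d_pt_comp.
Qed.

Lemma time_C1_cos (f : R -> R -> R) : time_C1 f -> time_C1 (fun s t => cos (f s t)).
Proof.
  apply (time_C1_comp cos (fun x => - sin x)).
  - intros x. auto_derive; [easy | ring].
  - intros x. apply continuity_pt_opp, continuity_sin.
Qed.

Lemma time_C1_sin (f : R -> R -> R) : time_C1 f -> time_C1 (fun s t => sin (f s t)).
Proof.
  apply (time_C1_comp sin cos).
  - intros x. auto_derive; [easy | ring].
  - apply continuity_cos.
Qed.

Lemma time_C1_stretch (eta : R) (p : R -> R -> R) : C1_2 p -> time_C1 (stretch eta p).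
Proof.
  intros Hp. unfold stretch.
  apply time_C1_plus; [apply time_C1_static; intros; apply continuous_const|].
  apply time_C1_mult; [apply time_C1_static; intros; apply continuous_const|].
  now apply C1_2_time_C1.
Qed.

Lemma is_derive_RInt_time_C1 (g : R -> R -> R) (a b t : R) :
  time_C1 g ->
  is_derive (fun tau => RInt (fun s => g s tau) a b) t
            (RInt (fun s => Derive (fun w => g s w) t) a b).
Proof.
  intros Hg.
  apply (is_derive_RInt_param (fun tau s => g s tau)).
  - apply filter_forall. intros tau s _. apply (Hg s tau).
  - intros s _. apply continuity_2d_pt_swap, (Hg s t).
  - apply filter_forall. intros tau.
    apply (ex_RInt_continuous (V := R_CompleteNormedModule)). intros s _.
    apply (continuity_2d_pt_continuous_l g), (Hg s tau).
Qed.

Lemma is_derive_RInt_upper (h : R -> R) (a x : R) :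
  (forall y, continuous h y) -> is_derive (fun s => RInt h a s) x (h x).
Proof.
  intros Hh. apply (is_derive_RInt h _ a x); [|apply Hh].
  apply filter_forall. intros s.
  apply (RInt_correct (V := R_CompleteNormedModule)), ex_RInt_continuous.
  intros; apply Hh.
Qed.

(* Cauchy's formula for repeated integration: [(s - b) * RInt h a s] is an antiderivative
   of [RInt h a s - (b - s) * h s]. *)
Lemma is_RInt_repeated (h : R -> R) (a b : R) :
  (forall y, continuous h y) ->
  is_RInt (fun s => RInt h a s) a b (RInt (fun s => (b - s) * h s) a b).
Proof.
  intros Hh.
  assert (Hw : forall y, continuous (fun s => (b - s) * h s) y).
  { intros y. apply (continuous_mult (fun s => b - s) h); [|apply Hh].
    apply (continuous_minus (fun _ => b) (fun s => s));
      [apply continuous_const | apply continuous_id]. }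
  assert (Hprim : is_RInt (fun s => RInt h a s - (b - s) * h s) a b 0).
  { replace 0 with (minus ((b - b) * RInt h a b) ((a - b) * RInt h a a))
      by (rewrite RInt_point; unfold minus, plus, opp, zero; simpl; ring).
    apply (is_RInt_derive (fun s => (s - b) * RInt h a s)).
    - intros s _.
      replace (RInt h a s - (b - s) * h s) with (1 * RInt h a s + (s - b) * h s) by ring.
      apply (is_derive_mult (fun s => s - b) (fun s => RInt h a s));
        [auto_derive; auto; ring | apply is_derive_RInt_upper, Hh | apply Rmult_comm].
    - intros s _.
      apply (continuous_minus (fun s => RInt h a s) (fun s => (b - s) * h s)); [|apply Hw].
      apply (ex_derive_continuous (V := R_NormedModule)). eexists.
      apply is_derive_RInt_upper, Hh. }
  assert (Hweight := RInt_correct (V := R_CompleteNormedModule) _ a b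
                       (ex_RInt_continuous (V := R_CompleteNormedModule) _ a b (fun y _ => Hw y))).
  replace (RInt (fun s => (b - s) * h s) a b)
    with (plus 0 (RInt (fun s => (b - s) * h s) a b)) by (unfold plus; simpl; ring).
  eapply is_RInt_ext; [|exact (is_RInt_plus _ _ _ _ _ _ Hprim Hweight)].
  intros s _. unfold plus; simpl; ring.
Qed.

Definition derive_RInt_commute (F : R -> R -> R) (a b t : R) : Prop :=
  (forall tau, ex_RInt (fun s => F s tau) a b) /\
  (forall s, ex_derive (fun tau => F s tau) t) /\
  exists D : R, is_RInt (fun s => Derive (fun tau => F s tau) t) a b D /\
                is_derive (fun tau => RInt (fun s => F s tau) a b) t D.

Lemma derive_RInt_commute_time (X : R -> R) (a b t : R) :
  ex_derive X t -> derive_RInt_commute (fun _ tau => X tau) a b t.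
Proof.
  intros HX. split; [|split].
  - intros tau. apply ex_RInt_const.
  - intros _. exact HX.
  - exists ((b - a) * Derive X t). split.
    + apply (is_RInt_const (V := R_NormedModule)).
    + apply (is_derive_ext (fun tau => (b - a) * X tau)).
      * intros tau. symmetry. apply (RInt_const (V := R_CompleteNormedModule)).
      * apply is_derive_scal, Derive_correct, HX.
Qed.

Lemma derive_RInt_commute_plus (F G : R -> R -> R) (a b t : R) :
  derive_RInt_commute F a b t -> derive_RInt_commute G a b t ->
  derive_RInt_commute (fun s tau => F s tau + G s tau) a b t.
Proof.
  intros (IF & DF & dF & HdF & HF) (IG & DG & dG & HdG & HG). split; [|split].
  - intros tau. exact (ex_RInt_plus _ _ _ _ (IF tau) (IG tau)).
  - intros s. exact (ex_derive_plus _ _ _ (DF s) (DG s)).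
  - exists (dF + dG). split.
    + eapply is_RInt_ext; [|exact (is_RInt_plus _ _ _ _ _ _ HdF HdG)].
      intros s _. symmetry. exact (Derive_plus _ _ _ (DF s) (DG s)).
    + eapply is_derive_ext; [|exact (is_derive_plus _ _ _ _ _ HF HG)].
      intros tau. symmetry. exact (RInt_plus _ _ _ _ (IF tau) (IG tau)).
Qed.

Lemma derive_RInt_commute_minus (F G : R -> R -> R) (a b t : R) :
  derive_RInt_commute F a b t -> derive_RInt_commute G a b t ->
  derive_RInt_commute (fun s tau => F s tau - G s tau) a b t.
Proof.
  intros (IF & DF & dF & HdF & HF) (IG & DG & dG & HdG & HG). split; [|split].
  - intros tau. exact (ex_RInt_minus _ _ _ _ (IF tau) (IG tau)).
  - intros s. exact (ex_derive_minus _ _ _ (DF s) (DG s)).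
  - exists (dF - dG). split.
    + eapply is_RInt_ext; [|exact (is_RInt_minus _ _ _ _ _ _ HdF HdG)].
      intros s _. symmetry. exact (Derive_minus _ _ _ (DF s) (DG s)).
    + eapply is_derive_ext; [|exact (is_derive_minus _ _ _ _ _ HF HG)].
      intros tau. symmetry. exact (RInt_minus _ _ _ _ (IF tau) (IG tau)).
Qed.

Lemma derive_RInt_commute_scal (c : R -> R) (F : R -> R -> R) (a b t : R) :
  ex_derive c t -> derive_RInt_commute F a b t ->
  derive_RInt_commute (fun s tau => c tau * F s tau) a b t.
Proof.
  intros Hc (IF & DF & dF & HdF & HF). split; [|split].
  - intros tau. exact (ex_RInt_scal _ _ _ (c tau) (IF tau)).
  - intros s. exact (ex_derive_mult c (fun tau => F s tau) t Hc (DF s)).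
  - exists (Derive c t * RInt (fun s => F s t) a b + c t * dF). split.
    + eapply is_RInt_ext.
      * intros s _. symmetry. exact (Derive_mult c (fun tau => F s tau) t Hc (DF s)).
      * apply (is_RInt_plus (V := R_NormedModule)); apply (is_RInt_scal (V := R_NormedModule));
          [apply (RInt_correct (V := R_CompleteNormedModule)), IF | exact HdF].
    + eapply is_derive_ext.
      * intros tau. symmetry. exact (RInt_scal _ _ _ (c tau) (IF tau)).
      * apply (is_derive_mult c (fun tau => RInt (fun s => F s tau) a b));
          [apply Derive_correct, Hc | exact HF | apply Rmult_comm].
Qed.

Lemma derive_RInt_commute_primitive (g : R -> R -> R) (a b t : R) :
  time_C1 g -> derive_RInt_commute (fun s tau => RInt (fun r => g r tau) a s) a b t.
Proof.
  intros Hg.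
  assert (Cg : forall tau y, continuous (fun r => g r tau) y)
    by (intros tau y; apply (continuity_2d_pt_continuous_l g), (Hg y tau)).
  assert (Cdg : forall y, continuous (fun r => Derive (fun w => g r w) t) y)
    by (intros y; apply (continuity_2d_pt_continuous_l (fun u v => Derive (fun w => g u w) v)), (Hg y t)).
  assert (Dg : forall s, is_derive (fun tau => RInt (fun r => g r tau) a s) t
                                   (RInt (fun r => Derive (fun w => g r w) t) a s))
    by (intros s; apply is_derive_RInt_time_C1, Hg).
  split; [|split].
  - intros tau. eexists. apply is_RInt_repeated, Cg.
  - intros s. eexists. apply Dg.
  - exists (RInt (fun r => (b - r) * Derive (fun w => g r w) t) a b). split.
    + eapply is_RInt_ext; [|apply is_RInt_repeated, Cdg].
      intros s _. symmetry. apply is_derive_unique, Dg.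
    + apply (is_derive_ext (fun tau => RInt (fun r => (b - r) * g r tau) a b)).
      * intros tau. symmetry. apply is_RInt_unique, is_RInt_repeated, Cg.
      * replace (RInt (fun r => (b - r) * Derive (fun w => g r w) t) a b)
          with (RInt (fun r => Derive (fun w => (b - r) * g r w) t) a b)
          by (apply RInt_ext; intros; apply Derive_scal).
        apply (is_derive_RInt_time_C1 (fun r tau => (b - r) * g r tau)).
        apply time_C1_mult; [|exact Hg].
        apply time_C1_static. intros y.
        apply (continuous_minus (fun _ => b) (fun r => r)); [apply continuous_const | apply continuous_id].
Qed.

Lemma derive_RInt_commute_xlab1 L0 eta p th (X1 Th : R -> R) t :
  C1_2 p -> C1_2 th -> ex_derive X1 t -> ex_derive Th t ->
  derive_RInt_commute (fun s0 tau => xlab1 X1 Th eta p th s0 tau) 0 L0 t.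
Proof.
  intros Hp Hth HX HTh. unfold xlab1, xbody1, xbody2.
  apply derive_RInt_commute_minus; [apply derive_RInt_commute_plus|].
  - now apply derive_RInt_commute_time.
  - apply (derive_RInt_commute_scal (fun tau => cos (Th tau))); [auto_derive; auto|].
    apply derive_RInt_commute_primitive, time_C1_mult.
    + now apply time_C1_stretch.
    + now apply time_C1_cos, C1_2_time_C1.
  - apply (derive_RInt_commute_scal (fun tau => sin (Th tau))); [auto_derive; auto|].
    apply derive_RInt_commute_primitive, time_C1_mult.
    + now apply time_C1_stretch.
    + now apply time_C1_sin, C1_2_time_C1.
Qed.

Lemma derive_RInt_commute_xlab2 L0 eta p th (X2 Th : R -> R) t :
  C1_2 p -> C1_2 th -> ex_derive X2 t -> ex_derive Th t ->
  derive_RInt_commute (fun s0 tau => xlab2 X2 Th eta p th s0 tau) 0 L0 t.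
Proof.
  intros Hp Hth HX HTh. unfold xlab2, xbody1, xbody2.
  apply derive_RInt_commute_plus; [apply derive_RInt_commute_plus|].
  - now apply derive_RInt_commute_time.
  - apply (derive_RInt_commute_scal (fun tau => sin (Th tau))); [auto_derive; auto|].
    apply derive_RInt_commute_primitive, time_C1_mult.
    + now apply time_C1_stretch.
    + now apply time_C1_cos, C1_2_time_C1.
  - apply (derive_RInt_commute_scal (fun tau => cos (Th tau))); [auto_derive; auto|].
    apply derive_RInt_commute_primitive, time_C1_mult.
    + now apply time_C1_stretch.
    + now apply time_C1_sin, C1_2_time_C1.
Qed.

Lemma rft1_isotropic C X1 X2 Th eta p th s0 t :
  rft1 C C X1 X2 Th eta p th s0 t = - C * vel1 X1 Th eta p th s0 t.
Proof.
  unfold rft1, epar1, epar2, eperp1, eperp2; cbv zeta.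
  pose proof (sin2_cos2 (Th t + th s0 t)) as E. unfold Rsqr in E.
  set (c := cos (Th t + th s0 t)) in *. set (s := sin (Th t + th s0 t)) in *.
  transitivity (- C * vel1 X1 Th eta p th s0 t * (s * s + c * c)); [ring | rewrite E; ring].
Qed.

Lemma rft2_isotropic C X1 X2 Th eta p th s0 t :
  rft2 C C X1 X2 Th eta p th s0 t = - C * vel2 X2 Th eta p th s0 t.
Proof.
  unfold rft2, epar1, epar2, eperp1, eperp2; cbv zeta.
  pose proof (sin2_cos2 (Th t + th s0 t)) as E. unfold Rsqr in E.
  set (c := cos (Th t + th s0 t)) in *. set (s := sin (Th t + th s0 t)) in *.
  transitivity (- C * vel2 X2 Th eta p th s0 t * (s * s + c * c)); [ring | rewrite E; ring].
Qed.

Lemma stretch_uniform L0 eta p :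
  C1_2 p -> (forall s0 t, 0 <= s0 <= L0 -> Derive (fun u => p u t) s0 = 0) ->
  forall s0 t, 0 <= s0 <= L0 -> stretch eta p s0 t = stretch eta p 0 t.
Proof.
  intros Hp Hunif s0 t Hs0. unfold stretch.
  destruct (Req_dec s0 0) as [-> | Hne]; [reflexivity|].
  replace (p s0 t) with (p 0 t); [reflexivity|].
  apply (eq_is_derive (fun u => p u t)); [|lra].
  intros u Hu. pose proof (Derive_correct _ _ (proj1 (Hp u t))) as Du.
  rewrite Hunif in Du by lra. exact Du.
Qed.

Lemma RInt_mult_uniform (F w : R -> R) (L0 lam : R) :
  0 <= L0 -> ex_RInt F 0 L0 -> (forall s, 0 <= s <= L0 -> w s = lam) ->
  RInt (fun s => F s * w s) 0 L0 = lam * RInt F 0 L0.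
Proof.
  intros HL HF Hw. rewrite <- (RInt_scal (V := R_CompleteNormedModule)) by exact HF.
  apply RInt_ext. rewrite Rmin_left, Rmax_right by exact HL.
  intros s Hs. rewrite Hw by lra. apply Rmult_comm.
Qed.

Lemma centre_stationary (x f w : R -> R -> R) (lam : R -> R) (L0 C t : R) :
  0 < L0 -> 0 < C -> (forall tau, 0 < lam tau) ->
  (forall s tau, 0 <= s <= L0 -> w s tau = lam tau) ->
  derive_RInt_commute x 0 L0 t ->
  (forall s, f s t = - C * Derive (fun tau => x s tau) t) ->
  RInt (fun s => f s t * w s t) 0 L0 = 0 ->
  is_derive (fun tau => / RInt (fun s => w s tau) 0 L0 * RInt (fun s => x s tau * w s tau) 0 L0)
            t 0.
Proof.
  intros HL HC Hlam Hw (Ix & _ & D & HD & HI) Hf Hforce.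
  assert (Hf_int : is_RInt (fun s => f s t) 0 L0 (- C * D)).
  { eapply is_RInt_ext; [|exact (is_RInt_scal _ _ _ (- C) _ HD)].
    intros s _. symmetry. apply Hf. }
  assert (HD0 : D = 0).
  { rewrite (RInt_mult_uniform _ _ L0 (lam t)), (is_RInt_unique _ _ _ _ Hf_int) in Hforce;
      [| lra | eexists; exact Hf_int | auto].
    specialize (Hlam t).
    destruct (Rmult_integral _ _ Hforce) as [H | H]; [lra|].
    destruct (Rmult_integral _ _ H); lra. }
  apply (is_derive_ext (fun tau => / L0 * RInt (fun s => x s tau) 0 L0)).
  - intros tau. specialize (Hlam tau).
    rewrite (RInt_mult_uniform _ _ L0 (lam tau)) by (auto; lra).
    rewrite (RInt_ext (fun s => w s tau) (fun _ => lam tau)), RInt_const.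
    + unfold scal; simpl; unfold mult; simpl. field. lra.
    + rewrite Rmin_left, Rmax_right by lra. intros s Hs. apply Hw. lra.
  - apply (is_derive_scal _ _ (/ L0)) in HI. rewrite HD0, Rmult_0_r in HI. exact HI.
Qed.

Lemma no_net_motion_uniform_isotropic (L0 eta : R) (p th : R -> R -> R) (Cpar Cperp : R)
    (X1 X2 Th : R -> R) :
  admissible L0 eta p th Cpar Cperp X1 X2 Th ->
  Cperp / Cpar = 1 ->
  (forall s0 t, 0 <= s0 <= L0 -> Derive (fun u => p u t) s0 = 0) ->
  force_torque_free L0 eta p th Cpar Cperp X1 X2 Th ->
  forall t, is_derive (Xbar1 L0 eta p th X1 Th) t 0 /\
            is_derive (Xbar2 L0 eta p th X2 Th) t 0.
Proof.
  intros (HL0 & HCpar & _ & Hp & Hth & HX1 & HX2 & HTh & Hpos) Hratio Hunif Hff t.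
  assert (Cperp = Cpar) as ->.
  { apply (Rmult_eq_reg_r (/ Cpar)); [|apply Rinv_neq_0_compat; lra].
    rewrite Rinv_r by lra. exact Hratio. }
  destruct (Hff t) as (F1 & F2 & _).
  assert (Hlam : forall tau, 0 < stretch eta p 0 tau) by (intros; apply Hpos; lra).
  assert (Hw := stretch_uniform L0 eta p Hp Hunif).
  split; unfold Xbar1, Xbar2, curlen.
  - apply (centre_stationary _ (fun s0 tau => rft1 Cpar Cpar X1 X2 Th eta p th s0 tau)
             _ (stretch eta p 0) L0 Cpar); auto.
    + now apply derive_RInt_commute_xlab1.
    + intros s0. apply rft1_isotropic.
  - apply (centre_stationary _ (fun s0 tau => rft2 Cpar Cpar X1 X2 Th eta p th s0 tau)
             _ (stretch eta p 0) L0 Cpar); auto.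
    + now apply derive_RInt_commute_xlab2.
    + intros s0. apply rft2_isotropic.
Qed.

Lemma RInt_antiderivative (f F : R -> R) (a b v : R) :
  (forall x, is_derive F x (f x)) -> (forall x, ex_derive f x) -> F b - F a = v ->
  RInt f a b = v.
Proof.
  intros HF Hf <-. apply (is_RInt_unique (V := R_CompleteNormedModule)).
  apply (is_RInt_derive (V := R_CompleteNormedModule) F f); intros x _; [apply HF|].
  apply (ex_derive_continuous (V := R_NormedModule)), Hf.
Qed.

Lemma RInt_eq_0 (f : R -> R) (a b : R) : (forall x, f x = 0) -> RInt f a b = 0.
Proof.
  intros Hf. rewrite (RInt_ext f (fun _ => 0)) by (intros; apply Hf).
  rewrite (RInt_const (V := R_CompleteNormedModule)). apply Rmult_0_r.
Qed.

(* A straight rod (theta = 0) stretching asymmetrically about its midpoint; [rod_X1] is the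
   translation that makes the total drag vanish. *)
Definition rod_p (s t : R) : R := (s - 1/2) * sin t.
Definition rod_th (s t : R) : R := 0.
Definition rod_X1 (t : R) : R := sin t / 12.
Definition rod_X2 (t : R) : R := 0.
Definition rod_Th (t : R) : R := 0.

Lemma rod_xbody1 s0 t : xbody1 1 rod_p rod_th s0 t = s0 + sin t * (s0 * s0 / 2 - s0 / 2).
Proof.
  unfold xbody1, stretch, rod_p, rod_th.
  apply (RInt_antiderivative _ (fun s => s + sin t * (s * s / 2 - s / 2))).
  - intros x. auto_derive; auto. rewrite cos_0. field.
  - intros x. auto_derive; auto.
  - field.
Qed.

Lemma rod_xbody2 s0 t : xbody2 1 rod_p rod_th s0 t = 0.
Proof.
  unfold xbody2, rod_th. apply RInt_eq_0. intros x. rewrite sin_0. apply Rmult_0_r.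
Qed.

Lemma rod_xlab1 s0 t :
  xlab1 rod_X1 rod_Th 1 rod_p rod_th s0 t = sin t / 12 + (s0 + sin t * (s0 * s0 / 2 - s0 / 2)).
Proof. unfold xlab1, rod_X1, rod_Th. rewrite rod_xbody1, rod_xbody2, cos_0, sin_0. ring. Qed.

Lemma rod_xlab2 s0 t : xlab2 rod_X2 rod_Th 1 rod_p rod_th s0 t = 0.
Proof. unfold xlab2, rod_X2, rod_Th. rewrite rod_xbody1, rod_xbody2, cos_0, sin_0. ring. Qed.

Lemma rod_vel1 s0 t : vel1 rod_X1 rod_Th 1 rod_p rod_th s0 t = cos t / 12 + cos t * (s0 * s0 / 2 - s0 / 2).
Proof.
  unfold vel1. apply is_derive_unique.
  apply (is_derive_ext (fun tau => sin tau / 12 + (s0 + sin tau * (s0 * s0 / 2 - s0 / 2)))).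
  - intros tau. symmetry. apply rod_xlab1.
  - auto_derive; auto. field.
Qed.

Lemma rod_vel2 s0 t : vel2 rod_X2 rod_Th 1 rod_p rod_th s0 t = 0.
Proof.
  unfold vel2. apply is_derive_unique.
  apply (is_derive_ext (fun _ => 0)); [intros; symmetry; apply rod_xlab2 | auto_derive; auto].
Qed.

Lemma rod_force_torque_free : force_torque_free 1 1 rod_p rod_th 1 1 rod_X1 rod_X2 rod_Th.
Proof.
  intros t. split; [|split].
  - erewrite RInt_ext.
    2: { intros x _. rewrite rft1_isotropic, rod_vel1. unfold stretch, rod_p. reflexivity. }
    apply (RInt_antiderivative _ (fun s => - cos t * (s / 12 + s * s * s / 6 - s * s / 4
              + sin t * ((s * s - s) / 24 + (s * s - s) * (s * s - s) / 8)))).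
    + intros x. auto_derive; auto. field.
    + intros x. auto_derive; auto.
    + field.
  - apply RInt_eq_0. intros x. rewrite rft2_isotropic, rod_vel2. ring.
  - apply RInt_eq_0. intros x. unfold rftb1, rftb2, rod_Th.
    rewrite rft2_isotropic, rod_vel2, rod_xbody2, sin_0. ring.
Qed.

Lemma rod_curlen t : curlen 1 1 rod_p t = 1.
Proof.
  unfold curlen, stretch, rod_p.
  apply (RInt_antiderivative _ (fun s => s + sin t * (s * s / 2 - s / 2))).
  - intros x. auto_derive; auto. field.
  - intros x. auto_derive; auto.
  - field.
Qed.

Lemma rod_Xbar1 t : Xbar1 1 1 rod_p rod_th rod_X1 rod_Th t = sin t / 12 + 1 / 2.
Proof.
  unfold Xbar1. rewrite rod_curlen, Rinv_1, Rmult_1_l.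
  erewrite RInt_ext.
  2: { intros x _. rewrite rod_xlab1. unfold stretch, rod_p. reflexivity. }
  set (xb := fun s => s + sin t * (s * s / 2 - s / 2)).
  apply (RInt_antiderivative _ (fun s => sin t / 12 * xb s + xb s * xb s / 2)); unfold xb.
  - intros x. auto_derive; auto. field.
  - intros x. auto_derive; auto.
  - field.
Qed.

Lemma rod_Xbar2 t : Xbar2 1 1 rod_p rod_th rod_X2 rod_Th t = 0.
Proof.
  unfold Xbar2. rewrite RInt_eq_0; [apply Rmult_0_r|].
  intros x. rewrite rod_xlab2. apply Rmult_0_l.
Qed.

Lemma rod_p_C1_2 : C1_2 rod_p.
Proof.
  assert (Csin : forall x y, continuity_2d_pt (fun _ v => sin v) x y).
  { intros x y. apply (continuity_1d_2d_pt_comp sin (fun _ v => v)).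
    - apply continuity_sin.
    - apply continuity_2d_pt_id2. }
  assert (Cpoly : forall x y, continuity_2d_pt (fun u _ => u - 1 / 2) x y).
  { intros x y. apply continuity_2d_pt_minus.
    - apply continuity_2d_pt_id1.
    - apply continuity_2d_pt_const. }
  intros x y. unfold rod_p. split; [|split; [|split; [|split]]].
  - auto_derive; auto.
  - auto_derive; auto.
  - now apply continuity_2d_pt_mult.
  - apply (continuity_2d_pt_ext (fun _ v => sin v)); [|apply Csin].
    intros u v. symmetry. apply is_derive_unique. auto_derive; auto. ring.
  - apply (continuity_2d_pt_ext (fun u v => (u - 1 / 2) * cos v)).
    + intros u v. symmetry. apply is_derive_unique. auto_derive; auto. ring.
    + apply continuity_2d_pt_mult; [apply Cpoly|].
      apply (continuity_1d_2d_pt_comp cos (fun _ v => v)).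
      - apply continuity_cos.
      - apply continuity_2d_pt_id2.
Qed.

Lemma rod_th_C1_2 : C1_2 rod_th.
Proof.
  intros x y. unfold rod_th. split; [|split; [|split; [|split]]].
  - apply ex_derive_const.
  - apply ex_derive_const.
  - apply continuity_2d_pt_const.
  - eapply continuity_2d_pt_ext; [|apply continuity_2d_pt_const].
    intros u v. symmetry. apply Derive_const.
  - eapply continuity_2d_pt_ext; [|apply continuity_2d_pt_const].
    intros u v. symmetry. apply Derive_const.
Qed.

Lemma net_motion_nonuniform_isotropic :
  exists (L0 eta : R) (p th : R -> R -> R) (Cpar Cperp : R) (X1 X2 Th : R -> R),
    admissible L0 eta p th Cpar Cperp X1 X2 Th /\
    Cperp / Cpar = 1 /\
    (exists s0 t, 0 <= s0 <= L0 /\ Derive (fun u => p u t) s0 <> 0) /\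
    force_torque_free L0 eta p th Cpar Cperp X1 X2 Th /\
    exists t v1 v2, is_derive (Xbar1 L0 eta p th X1 Th) t v1 /\
                    is_derive (Xbar2 L0 eta p th X2 Th) t v2 /\
                    (v1 <> 0 \/ v2 <> 0).
Proof.
  exists 1, 1, rod_p, rod_th, 1, 1, rod_X1, rod_X2, rod_Th.
  split; [|split; [|split; [|split]]].
  - split; [lra|]. split; [lra|]. split; [lra|].
    split; [exact rod_p_C1_2|]. split; [exact rod_th_C1_2|].
    split; [|split; [|split]].
    + intros t. unfold rod_X1. auto_derive. easy.
    + intros t. apply ex_derive_const.
    + intros t. apply ex_derive_const.
    + intros s0 t Hs0. unfold stretch, rod_p. pose proof (SIN_bound t). nra.
  - field.
  - exists 0, (PI / 2). split; [lra|].
    rewrite (is_derive_unique _ _ (sin (PI / 2))), sin_PI2; [lra|].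
    unfold rod_p. auto_derive; auto. ring.
  - exact rod_force_torque_free.
  - exists 0, (1 / 12), 0. split; [|split].
    + apply (is_derive_ext (fun t => sin t / 12 + 1 / 2)); [intros; symmetry; apply rod_Xbar1|].
      auto_derive; auto. rewrite cos_0. field.
    + apply (is_derive_ext (fun _ => 0)); [intros; symmetry; apply rod_Xbar2 | auto_derive; auto].
    + left. lra.
Qed.

Theorem proposition1 :
  (* (i) uniform compression, isotropic drag: no net motion *)
  (forall (L0 eta : R) (p th : R -> R -> R) (Cpar Cperp : R) (X1 X2 Th : R -> R),
      admissible L0 eta p th Cpar Cperp X1 X2 Th ->
      Cperp / Cpar = 1 ->
      (forall s0 t, 0 <= s0 <= L0 -> Derive (fun u => p u t) s0 = 0) ->
      force_torque_free L0 eta p th Cpar Cperp X1 X2 Th ->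
      forall t, is_derive (Xbar1 L0 eta p th X1 Th) t 0 /\
                is_derive (Xbar2 L0 eta p th X2 Th) t 0)
  /\
  (* (ii) non-uniform compression, isotropic drag: net motion is possible *)
  (exists (L0 eta : R) (p th : R -> R -> R) (Cpar Cperp : R) (X1 X2 Th : R -> R),
      admissible L0 eta p th Cpar Cperp X1 X2 Th /\
      Cperp / Cpar = 1 /\
      (exists s0 t, 0 <= s0 <= L0 /\ Derive (fun u => p u t) s0 <> 0) /\
      force_torque_free L0 eta p th Cpar Cperp X1 X2 Th /\
      exists t v1 v2, is_derive (Xbar1 L0 eta p th X1 Th) t v1 /\
                      is_derive (Xbar2 L0 eta p th X2 Th) t v2 /\
                      (v1 <> 0 \/ v2 <> 0)).
Proof.
  split.
  - exact no_net_motion_uniform_isotropic.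
  - exact net_motion_nonuniform_isotropic.
Qed.
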